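(* Let $q \in C^1(\mathbb{R}^n,\mathbb{R})$ be a scalar function, and let $A$, $B$ and $D$ be linear differential operators with constant coefficients on functions $\mathbb{R}^n\to\mathbb{R}$ with $D = A + B$. Suppose there exist a non-zero real number $u$, a natural number $\lambda$ and a sufficiently smooth function $W:\mathbb{R}^n\to\mathbb{R}$ such that $$A^{\lambda+1} W(\mathbf{x}) = q(\mathbf{x}) \quad\text{(integration condition)},\qquad B^{\lambda+1} W(\mathbf{x}) = (-1)^\lambda (u-1)\, q(\mathbf{x}) \quad\text{(relaxed annihilator condition)}.$$ Define $$Q(\mathbf{x}) := \sum_{p=0}^{\lambda} \frac{(-1)^p}{u} A^{\lambda-p} B^p W(\mathbf{x}).$$ Then $D Q = q$.
   Context: Powers of operators denote repeated application, with $A^0$, $B^0$ the identity. *)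

From HB Require Import structures.
From mathcomp Require Import all_boot all_order all_algebra.
From mathcomp Require Import all_classical all_reals all_analysis.
Set Implicit Arguments. Unset Strict Implicit. Unset Printing Implicit Defensive.
Import Order.TTheory GRing.Theory Num.Theory.
Import numFieldNormedType.Exports.
Local Open Scope ring_scope.

Section Defs.
Variables (R : realType) (n : nat).

Definition basis_vec (i : 'I_n) : 'rV[R]_n := delta_mx 0 i.

(* partial derivative d/dx_i (total operator via derive; junk where not derivable) *)
Definition partial (i : 'I_n) (f : 'rV[R]_n -> R) : 'rV[R]_n -> R :=
  fun x => 'D_(basis_vec i) f x.

Definition dpartials (s : seq 'I_n) (f : 'rV[R]_n -> R) : 'rV[R]_n -> R :=
  foldr partial f s.

(* A linear differential operator with constant (real) coefficients:
   a finite sum  sum_t c_t * d^{s_t}  of iterated partial derivatives. *)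
Record diffop := Diffop { diffop_terms : seq (R * seq 'I_n) }.

Definition apply_op (P : diffop) (f : 'rV[R]_n -> R) : 'rV[R]_n -> R :=
  fun x => \sum_(t <- diffop_terms P) t.1 * dpartials t.2 f x.

Definition op_pow (P : diffop) (k : nat) (f : 'rV[R]_n -> R) : 'rV[R]_n -> R :=
  iter k (apply_op P) f.

Definition C1 (f : 'rV[R]_n -> R) : Prop :=
  continuous f /\
  forall i : 'I_n, (forall x, derivable f x (basis_vec i)) /\ continuous (partial i f).

Definition smooth (f : 'rV[R]_n -> R) : Prop :=
  forall s : seq 'I_n, continuous (dpartials s f) /\
    forall (i : 'I_n) x, derivable (dpartials s f) x (basis_vec i).

End Defs.

From HB Require Import structures.
From mathcomp Require Import all_boot all_order all_algebra.
From mathcomp Require Import all_classical all_reals all_analysis.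
From mathcomp Require Import ring.
Set Implicit Arguments. Unset Strict Implicit. Unset Printing Implicit Defensive.
Import Order.TTheory GRing.Theory Num.Theory.
Import numFieldNormedType.Exports.
Local Open Scope ring_scope.

(* Write F_p = A^(lambda - p) B^p W.  Constant-coefficient operators commute on smooth
   functions by Schwarz's theorem (apply the mean value theorem twice to a mixed second
   difference), so (A + B) F_p = A^(lambda + 1 - p) B^p W + A^(lambda - p) B^(p + 1) W and
   the alternating sum u Q telescopes, as in the factorisation of
   x^(lambda + 1) + (-1)^lambda y^(lambda + 1) by x + y:
   u D Q = A^(lambda + 1) W + (-1)^lambda B^(lambda + 1) W = q + (u - 1) q = u q. *)

Section Schwarz.
Variables (R : realType) (V : normedModType R).

Lemma is_derive_line (f : V -> R) (v y : V) (s : R) :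
  derivable f (s *: v + y) v ->
  is_derive s 1 (fun t : R => f (t *: v + y)) ('D_v f (s *: v + y)).
Proof.
move=> df.
have E : (fun h : R => h^-1 *: (((fun t : R => f (t *: v + y)) \o shift s) (h *: 1)
            - f (s *: v + y))) =
         (fun h : R => h^-1 *: ((f \o shift (s *: v + y)) (h *: v) - f (s *: v + y))).
  apply: funext => h /=; congr (_ *: (f _ - _)).
  by rewrite /shift /= [h%:A]mulr1 scalerDl addrA.
split; first by rewrite /derivable E.
by rewrite /derive E.
Qed.

Lemma MVT_from0 (f df : R -> R) (h : R) : 0 < h ->
  (forall t : R, is_derive t 1 f (df t)) ->
  exists2 c, c \in `[0, h]%R & f h - f 0 = df c * h.
Proof.
move=> h0 fd.
have cf : continuous f.
  by move=> t; apply/differentiable_continuous/derivable1_diffP; have [] := fd t.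
have [c cI] := MVT_segment (ltW h0) (fun t _ => fd t) (continuous_subspaceT cf).
by rewrite subr0; exists c.
Qed.

Lemma mixed_second_difference (g : V -> R) (a b x : V) (h : R) : 0 < h ->
  (forall y, derivable g y a) -> (forall y, derivable ('D_a g) y b) ->
  exists2 y, `|y - x| <= h * (`|a| + `|b|) &
    g (x + h *: a + h *: b) - g (x + h *: a) - g (x + h *: b) + g x
      = h * h * 'D_b ('D_a g) y.
Proof.
move=> h0 da dab.
pose phi s := g (s *: a + (x + h *: b)) - g (s *: a + x).
have dphi (t : R) : is_derive t (1 : R) phi
    ('D_a g (t *: a + (x + h *: b)) - 'D_a g (t *: a + x)).
  exact: is_deriveB (@is_derive_line _ _ (x + h *: b) _ (da _))
                    (@is_derive_line _ _ x _ (da _)).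
have [s /[!in_itv]/andP[s0 sh] Es] := MVT_from0 h0 dphi.
pose psi t := 'D_a g (t *: b + (s *: a + x)).
have dpsi (t : R) : is_derive t (1 : R) psi ('D_b ('D_a g) (t *: b + (s *: a + x))).
  exact: is_derive_line.
have [t /[!in_itv]/andP[t0 th] Et] := MVT_from0 h0 dpsi.
exists (t *: b + (s *: a + x)).
  rewrite addrA addrK (le_trans (ler_normD _ _)) // !normrZ.
  rewrite (ger0_norm s0) (ger0_norm t0) mulrDr addrC.
  by rewrite lerD // ler_wpM2r.
rewrite /phi /psi !scale0r !add0r in Es Et.
rewrite [h *: b + _]addrCA [h *: b + x]addrC in Et.
rewrite -[x + h *: a + h *: b]addrA [x + (_ + _)]addrCA [x + h *: a]addrC.
rewrite -mulrA [h * 'D_b _ _]mulrC -Et mulrC -Es; ring.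
Qed.

Lemma eq_at_of_near_coincidence (F G : V -> R) (x : V) :
  {for x, continuous F} -> {for x, continuous G} ->
  (forall r, 0 < r -> exists y z, [/\ ball x r y, ball x r z & F y = G z]) ->
  F x = G x.
Proof.
move=> cF cG meet; apply/eqP; rewrite -subr_eq0; apply: contraT => neq.
pose e := `|F x - G x| / 2.
have e0 : 0 < e by rewrite divr_gt0 // normr_gt0.
have [r r0 near_x] : nbhs_ball x (fun y => `|F x - F y| < e /\ `|G x - G y| < e).
  by apply/nbhs_ballP; apply: filterI; apply: cvgr_dist_lt.
have [y [z [xy xz Fy_Gz]]] := meet r r0.
have : `|F x - G x| < e + e.
  have -> : F x - G x = (F x - F y) + (G z - G x) by rewrite -Fy_Gz addrA subrK.
  rewrite (le_lt_trans (ler_normD _ _)) // ltrD //; first by have [] := near_x _ xy.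
  by rewrite distrC; have [] := near_x _ xz.
by rewrite /e -splitr ltxx.
Qed.

Lemma derive_dirC (g : V -> R) (a b : V) :
  (forall y, derivable g y a) -> (forall y, derivable g y b) ->
  (forall y, derivable ('D_a g) y b) -> (forall y, derivable ('D_b g) y a) ->
  continuous ('D_b ('D_a g)) -> continuous ('D_a ('D_b g)) ->
  'D_b ('D_a g) = 'D_a ('D_b g).
Proof.
move=> da db dab dba cab cba; apply: funext => x.
apply: (eq_at_of_near_coincidence (cab x) (cba x)) => r r0.
pose h := r / (`|a| + `|b| + 1).
have ab1 : 0 < `|a| + `|b| + 1 by rewrite ltr_wpDl // addr_ge0.
have h0 : 0 < h by rewrite divr_gt0.
have hr : h * (`|a| + `|b|) < r.
  by rewrite /h mulrAC ltr_pdivrMr // ltr_pM2l // ltrDl.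
have [y xy Ey] := mixed_second_difference x h0 da dab.
have [z xz Ez] := mixed_second_difference x h0 db dba.
exists y, z; split.
- by rewrite -ball_normE /= distrC (le_lt_trans xy).
- by rewrite -ball_normE /= distrC (le_lt_trans xz) // addrC.
- apply: (mulfI (x := h * h)); first by rewrite mulf_neq0 ?gt_eqF.
  by rewrite -Ey -Ez addrAC [x + h *: b + _]addrAC; ring.
Qed.
End Schwarz.

Section Operators.
Variables (R : realType) (n : nat).
Local Notation V := 'rV[R]_n.
Implicit Types (i : 'I_n) (f g : V -> R) (s : seq 'I_n) (P : diffop R n).

Lemma partialD i f g :
  (forall x, derivable f x (basis_vec R i)) -> (forall x, derivable g x (basis_vec R i)) ->
  partial i (fun x => f x + g x) = (fun x => partial i f x + partial i g x).
Proof. by move=> df dg; apply: funext => x; exact: deriveD. Qed.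

Lemma partialZ i (c : R) f : (forall x, derivable f x (basis_vec R i)) ->
  partial i (fun x => c * f x) = (fun x => c * partial i f x).
Proof. by move=> df; apply: funext => x; exact: deriveZ. Qed.

Lemma dpartials0 s : dpartials s (fun _ : V => 0) = (fun _ => 0).
Proof.
elim: s => [|i s IH] //=; rewrite IH.
by apply: funext => x; exact: (derive_cst (0 : R)).
Qed.

Lemma dpartials_cat s t f : dpartials s (dpartials t f) = dpartials (s ++ t) f.
Proof. by rewrite /dpartials foldr_cat. Qed.

Lemma smooth_dpartials t f : smooth f -> smooth (dpartials t f).
Proof. by move=> sf s; rewrite dpartials_cat; exact: sf. Qed.

Lemma smooth0 : smooth (fun _ : V => 0).
Proof.
move=> s; rewrite dpartials0; split; first exact: cst_continuous.
by move=> i x; exact: (derivable_cst (0 : R)).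
Qed.

Lemma dpartialsD s f g : smooth f -> smooth g ->
  dpartials s (fun x => f x + g x) = (fun x => dpartials s f x + dpartials s g x).
Proof.
move=> sf sg; elim: s => [|i s IH] //=.
by rewrite IH partialD //; [exact: (sf s).2 | exact: (sg s).2].
Qed.

Lemma dpartialsZ s (c : R) f : smooth f ->
  dpartials s (fun x => c * f x) = (fun x => c * dpartials s f x).
Proof.
move=> sf; elim: s => [|i s IH] //=.
by rewrite IH partialZ //; exact: (sf s).2.
Qed.

Lemma smoothD f g : smooth f -> smooth g -> smooth (fun x => f x + g x).
Proof.
move=> sf sg s; rewrite dpartialsD //; split.
  by move=> x; apply: continuousD; [exact: (sf s).1 | exact: (sg s).1].
by move=> i x; apply: derivableD; [exact: (sf s).2 | exact: (sg s).2].
Qed.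

Lemma smoothZ (c : R) f : smooth f -> smooth (fun x => c * f x).
Proof.
move=> sf s; rewrite dpartialsZ //; split.
  by move=> x; apply: continuousM; [exact: cst_continuous | exact: (sf s).1].
by move=> i x; apply: derivableZ; exact: (sf s).2.
Qed.

Section LinearCombination.
Variables (I : Type) (c : I -> R) (F : I -> V -> R).
Hypothesis smoothF : forall k, smooth (F k).

Lemma smooth_sum (l : seq I) : smooth (fun x => \sum_(k <- l) c k * F k x).
Proof.
elim: l => [|j l IH].
  under [fun x => _]funext => x do rewrite big_nil.
  exact: smooth0.
under [fun x => _]funext => x do rewrite big_cons.
exact: smoothD (smoothZ _ (smoothF j)) IH.
Qed.

Lemma dpartials_sum (l : seq I) s :
  dpartials s (fun x => \sum_(k <- l) c k * F k x) =
  (fun x => \sum_(k <- l) c k * dpartials s (F k) x).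
Proof.
elim: l => [|j l IH].
  have -> : (fun x => \sum_(k <- [::]) c k * F k x) = (fun _ => 0).
    by apply: funext => x; rewrite big_nil.
  by rewrite dpartials0; apply: funext => x; rewrite big_nil.
have -> : (fun x => \sum_(k <- j :: l) c k * F k x) =
          (fun x => c j * F j x + \sum_(k <- l) c k * F k x).
  by apply: funext => x; rewrite big_cons.
rewrite dpartialsD; [|exact: smoothZ|exact: smooth_sum].
by rewrite dpartialsZ // IH; apply: funext => x; rewrite big_cons.
Qed.
End LinearCombination.

Lemma smooth_apply_op P f : smooth f -> smooth (apply_op P f).
Proof.
move=> sf; apply: smooth_sum => t; exact: smooth_dpartials.
Qed.

Lemma smooth_op_pow P k f : smooth f -> smooth (op_pow P k f).
Proof. by move=> sf; elim: k => [|k IH] //=; exact: smooth_apply_op. Qed.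

Lemma partialC i j f : smooth f -> partial i (partial j f) = partial j (partial i f).
Proof.
move=> sf; apply: derive_dirC.
- exact: (sf [::]).2.
- exact: (sf [::]).2.
- exact: (sf [:: j]).2.
- exact: (sf [:: i]).2.
- exact: (sf [:: i; j]).1.
- exact: (sf [:: j; i]).1.
Qed.

Lemma dpartials_partial s i f : smooth f ->
  dpartials s (partial i f) = partial i (dpartials s f).
Proof.
move=> sf; elim: s => [|j s IH] //=.
by rewrite IH partialC //; exact: smooth_dpartials.
Qed.

Lemma dpartialsC s t f : smooth f ->
  dpartials s (dpartials t f) = dpartials t (dpartials s f).
Proof.
move=> sf; elim: t => [|i t IH] //=.
by rewrite dpartials_partial ?IH //; exact: smooth_dpartials.
Qed.

Lemma dpartials_apply_op s P f : smooth f ->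
  dpartials s (apply_op P f) = apply_op P (dpartials s f).
Proof.
move=> sf; rewrite /apply_op dpartials_sum; last by move=> t; exact: smooth_dpartials.
by apply: funext => x; apply: eq_bigr => t _; rewrite dpartialsC.
Qed.

Lemma apply_opC P P' f : smooth f ->
  apply_op P (apply_op P' f) = apply_op P' (apply_op P f).
Proof.
move=> sf; apply: funext => x; rewrite /apply_op.
under eq_bigr => t _ do rewrite dpartials_apply_op // /apply_op big_distrr.
under [RHS]eq_bigr => t _ do rewrite dpartials_apply_op // /apply_op big_distrr.
rewrite exchange_big /=; apply: eq_bigr => t _; apply: eq_bigr => t' _.
by rewrite mulrCA dpartialsC.
Qed.

Lemma apply_op_powC P P' k f : smooth f ->
  apply_op P' (op_pow P k f) = op_pow P k (apply_op P' f).
Proof.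
move=> sf; elim: k => [|k IH] //=.
by rewrite -IH apply_opC //; exact: smooth_op_pow.
Qed.

Lemma apply_op_sum P (I : Type) (l : seq I) (c : I -> R) (F : I -> V -> R) :
  (forall k, smooth (F k)) ->
  apply_op P (fun x => \sum_(k <- l) c k * F k x) =
  (fun x => \sum_(k <- l) c k * apply_op P (F k) x).
Proof.
move=> sF; apply: funext => x; rewrite /apply_op.
under eq_bigr => t _ do rewrite dpartials_sum // big_distrr.
rewrite exchange_big /=; apply: eq_bigr => k _.
by rewrite big_distrr; apply: eq_bigr => t _; rewrite mulrCA.
Qed.

End Operators.

Lemma sum_alternating_telescope (K : pzRingType) (T : nat -> nat -> K) m :
  \sum_(p < m.+1) (-1) ^+ p * (T (m - p)%N.+1 p + T (m - p)%N p.+1)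
    = T m.+1 0 + (-1) ^+ m * T 0 m.+1.
Proof.
pose S k := (-1) ^+ k * T (m.+1 - k)%N k.
rewrite -(big_mkord xpredT (fun p => (-1) ^+ p * (T (m - p)%N.+1 p + T (m - p)%N p.+1)))
  (telescope_sumr_eq (fun k => - S k)) //.
  by rewrite /S subn0 subnn expr0 mul1r exprS mulN1r mulNr opprK addrC opprK.
move=> k /andP[_ km]; rewrite /S opprK subSS subSn // exprS mulN1r mulNr opprK.
by rewrite mulrDr addrC.
Qed.

Theorem theorem4p2 (R : realType) (n : nat) (q : 'rV[R]_n -> R)
  (A B D : diffop R n) (u : R) (lambda : nat) (W : 'rV[R]_n -> R) :
  C1 q ->
  (forall f : 'rV[R]_n -> R, apply_op D f = (fun x => apply_op A f x + apply_op B f x)) ->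
  u != 0 ->
  smooth W ->
  op_pow A lambda.+1 W = q ->
  op_pow B lambda.+1 W = (fun x => (-1) ^+ lambda * (u - 1) * q x) ->
  let Q := fun x => \sum_(p < lambda.+1)
              ((-1) ^+ p / u) * op_pow A (lambda - p) (op_pow B p W) x in
  apply_op D Q = q.
Proof.
move=> _ DE u0 sW HA HB Q; rewrite DE /Q.
have sF p : smooth (op_pow A (lambda - p) (op_pow B p W)).
  by apply/smooth_op_pow/smooth_op_pow.
rewrite !apply_op_sum //; apply: funext => x; rewrite -big_split /=.
pose T i j := op_pow A i (op_pow B j W) x.
have termE (p : 'I_lambda.+1) :
    (-1) ^+ p / u * apply_op A (op_pow A (lambda - p) (op_pow B p W)) x +
    (-1) ^+ p / u * apply_op B (op_pow A (lambda - p) (op_pow B p W)) x =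
    u^-1 * ((-1) ^+ p * (T (lambda - p)%N.+1 p + T (lambda - p)%N p.+1)).
  rewrite (apply_op_powC A B); last exact: smooth_op_pow.
  by rewrite /T /op_pow /=; ring.
rewrite (eq_bigr _ (fun p _ => termE p)) -mulr_sumr sum_alternating_telescope.
have -> : T lambda.+1 0 = q x by rewrite -HA.
have -> : T 0 lambda.+1 = (-1) ^+ lambda * (u - 1) * q x by rewrite /T HB.
have sign2 : (-1) ^+ lambda * (-1) ^+ lambda = 1 :> R.
  by rewrite -exprMn mulrNN mulr1 expr1n.
by rewrite !mulrA sign2 mul1r; field.
Qed.
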